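(* Every strong partial metric space is $T_1$: if $s$ is a strong partial metric on a set $X$ and $\mathcal{T}$ is the topology on $X$ generated by the basis of $s$-open balls $B^s_\epsilon(x)=\{y\in X\mid s(x,y)-s(x,x)<\epsilon\}$ ($x\in X$, $\epsilon>0$), then for any two distinct $x,y\in X$ there exist open sets $U,V\in\mathcal{T}$ with $x\in U$, $y\notin U$, $y\in V$, $x\notin V$.
   Context: A strong partial metric on $X$ is a function $s:X\times X\to\mathbb{R}$ such that for all $x,y,z\in X$: $s(x,x)<s(x,y)$ whenever $x\ne y$; $s(x,y)=s(y,x)$; and $s(x,y)\le s(x,z)+s(z,y)-s(z,z)$. The $s$-open balls form a basis of a topology on $X$. *)

From Stdlib Require Import Reals.
Open Scope R_scope.

Definition strong_partial_metric {X : Type} (s : X -> X -> R) : Prop :=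
  (forall x y : X, x <> y -> s x x < s x y) /\
  (forall x y : X, s x y = s y x) /\
  (forall x y z : X, s x y <= s x z + s z y - s z z).

Definition sball {X : Type} (s : X -> X -> R) (x : X) (eps : R) : X -> Prop :=
  fun y => s x y - s x x < eps.

(* Open sets of the topology generated by the basis of s-open balls:
   U is open iff U is a union of balls, i.e. every point of U lies in
   some ball (with positive radius) contained in U. *)
Definition sopen {X : Type} (s : X -> X -> R) (U : X -> Prop) : Prop :=
  forall p : X, U p ->
    exists (z : X) (eps : R), 0 < eps /\ sball s z eps p /\
      (forall q : X, sball s z eps q -> U q).

(* The ball around x of radius s(x,y) - s(x,x) is open, contains x and misses
   y; the strictness axiom s(x,x) < s(x,y) makes its radius positive.  Swapping
   x and y gives the second set. *)
From Stdlib Require Import Reals Lra.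
Open Scope R_scope.

Section Balls.

Variables (X : Type) (s : X -> X -> R).

Lemma sopen_sball (z : X) (eps : R) : 0 < eps -> sopen s (sball s z eps).
Proof. intros Heps p Hp; exists z, eps; auto. Qed.

Lemma sball_center (x : X) (eps : R) : 0 < eps -> sball s x eps x.
Proof. unfold sball; lra. Qed.

Lemma sball_notin (x y : X) : ~ sball s x (s x y - s x x) y.
Proof. unfold sball; lra. Qed.

Lemma separating_sball (x y : X) :
  s x x < s x y ->
  exists U : X -> Prop, sopen s U /\ U x /\ ~ U y.
Proof.
  intros Hxy.
  assert (Hrad : 0 < s x y - s x x) by lra.
  exists (sball s x (s x y - s x x)); split; [| split].
  - now apply sopen_sball.
  - now apply sball_center.
  - apply sball_notin.
Qed.

End Balls.

Theorem lemma3p12 (X : Type) (s : X -> X -> R) :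
  strong_partial_metric s ->
  forall x y : X, x <> y ->
    exists U V : X -> Prop,
      sopen s U /\ sopen s V /\ U x /\ ~ U y /\ V y /\ ~ V x.
Proof.
  intros [Hstrong _] x y Hxy.
  destruct (separating_sball X s _ _ (Hstrong x y Hxy)) as [U [HU [HUx HUy]]].
  destruct (separating_sball X s _ _ (Hstrong y x (not_eq_sym Hxy))) as [V [HV [HVy HVx]]].
  exists U, V; tauto.
Qed.
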